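(* Let $S\subset\mathbb{N}$ be a WM set. Then $S$ is 1-recurrent: for every $E\subset\mathbb{N}$ with positive upper Banach density there exists $s\in S$ with $E\cap(E-s)\neq\emptyset$. In particular $S$ is a Poincaré set: for every probability measure preserving system $(X,\Sigma,\mu,T)$ and every $A\in\Sigma$ with $\mu(A)>0$ there exists $s\in S$ with $\mu(A\cap T^{-s}A)>0$.
   Context: $\mathbb{N}=\{1,2,\dots\}$. Upper Banach density: $d^*(E)=\limsup_{b_n-a_n\to\infty}\frac{|E\cap\{a_n,\dots,b_n\}|}{b_n-a_n+1}$. $\Omega=\{0,1\}^{\mathbb{N}}$ with product topology and left shift $T$; $X_{1_S}$ is the closure of $\{T^n1_S:n\ge0\}$. A point $\xi$ is generic for $(X,\mu,T)$ if $\frac1N\sum_{n=0}^{N-1}f(T^n\xi)\to\int f\,d\mu$ for all continuous $f$. $d(S)=\lim_N\frac1N|S\cap\{1,\dots,N\}|$. $S$ is a WM set if for some $T$-invariant Borel probability $\mu$ on $X_{1_S}$, $1_S$ is generic for $(X_{1_S},\mu,T)$, this system is weakly mixing, and $d(S)>0$. *)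

From HB Require Import structures.
From mathcomp Require Import all_boot all_order all_algebra.
From mathcomp Require Import all_classical all_reals all_analysis.
Set Implicit Arguments. Unset Strict Implicit. Unset Printing Implicit Defensive.
Import Order.TTheory GRing.Theory Num.Theory.
Import numFieldNormedType.Exports.
Local Open Scope classical_set_scope.
Local Open Scope ring_scope.

(* Omega = {0,1}^N with the product topology is [cantor_space]
   (= prod_topology (fun _ : nat => bool)); coordinate k of a point
   corresponds to the integer k+1 of N = {1,2,...}. *)

Definition Omega : Type := g_sigma_algebraType (@open cantor_space).

Definition shift (x : nat -> bool) : nat -> bool := fun n => x n.+1.

Definition indic (S : set nat) : nat -> bool := fun k => (k.+1 \in S).

Definition orbit_closure (S : set nat) : set cantor_space :=
  closure (range (fun n : nat => (iter n shift (indic S) : cantor_space))).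

Definition has_density (R : realType) (S : set nat) (d : R) : Prop :=
  (fun N : nat => (\sum_(1 <= k < N.+1) (k \in S)%:R) / N%:R) @ \oo --> d.

Definition generic (R : realType) (mu : probability Omega R)
    (xi : nat -> bool) : Prop :=
  forall f : cantor_space -> R, continuous f ->
    (fun N : nat =>
       ((N.+1%:R)^-1 * \sum_(n < N.+1) f (iter n shift xi))%:E) @ \oo -->
    (\int[mu]_x (f x)%:E)%E.

Definition shift_invariant (R : realType) (mu : probability Omega R) : Prop :=
  forall A : set Omega, measurable A -> mu (shift @^-1` A) = mu A.

Definition weakly_mixing (R : realType) (mu : probability Omega R) : Prop :=
  forall A B : set Omega, measurable A -> measurable B ->
    (fun N : nat => (N.+1%:R)^-1 *
       \sum_(n < N.+1) `| fine (mu (A `&` (iter n shift @^-1` B)))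
                         - fine (mu A) * fine (mu B) |) @ \oo --> (0 : R).

Definition WM_set (R : realType) (S : set nat) : Prop :=
  S `<=` [set n | (0 < n)%N] /\
  (exists mu : probability Omega R,
     mu (orbit_closure S) = 1%E /\          (* mu is a measure on X_{1_S} *)
     shift_invariant mu /\
     generic mu (indic S) /\
     weakly_mixing mu) /\
  (exists d : R, 0 < d /\ has_density S d).

Definition interval_ratio (R : realType) (E : set nat) (a b : nat) : R :=
  (\sum_(a <= k < b.+1) (k \in E)%:R) / (b - a + 1)%:R.

(* upper Banach density:
   d*(E) = limsup_{b_n - a_n -> oo} |E cap {a_n..b_n}| / (b_n - a_n + 1),
   i.e. the supremum, over all sequences of intervals {a_n..b_n} of N with
   b_n - a_n -> oo, of the limsup of the ratios. *)
Definition upper_banach_density (R : realType) (E : set nat) : \bar R :=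
  ereal_sup [set l | exists a b : nat -> nat,
     (forall n, (1 <= a n)%N) /\
     (forall M : nat, \forall n \near \oo, (M <= b n - a n)%N) /\
     l = limn_esup (fun n => (interval_ratio R E (a n) (b n))%:E)].

From Pilot Require Import Defs.
From HB Require Import structures.
From mathcomp Require Import all_boot all_order all_algebra.
From mathcomp Require Import all_classical all_reals all_analysis.
From mathcomp Require Import ring lra zify.
Set Implicit Arguments. Unset Strict Implicit. Unset Printing Implicit Defensive.
Import Order.TTheory GRing.Theory Num.Theory.
Import numFieldNormedType.Exports.
Local Open Scope classical_set_scope.
Local Open Scope ring_scope.

(* Call s a difference clique of S when all positive differences of elements
   of s lie in S.  Both conclusions follow once S has arbitrarily large
   difference cliques.  For a measure-preserving T and a clique s of size
   > 1/mu(A), the sets T^-x A (x in s) cannot pairwise meet in null sets, as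
   their union would have measure |s| mu(A) > 1.  For E of upper Banach density
   > delta and a clique s of size > 2/delta, the translates (E cap [a,b]) + x
   (x in s) cannot be pairwise disjoint inside a window of length at most
   2 (b - a + 1).

   Large cliques come from weak mixing, growing s with the invariant that the
   cylinder of the pattern {h - x : x in s}, h = max s, has positive measure.
   Genericity of 1_S and weak mixing give a time t at which the t-shift of 1_S
   lies in that cylinder, i.e. h + t + 1 - x is in S for every x in s, while
   [x_0 = 1] cap T^-(t+1) (cylinder) is still non-null, which is the invariant
   for s + {h + t + 1}.  Such t exists: otherwise every visit of 1_S to a set B
   at time t makes |mu(A cap T^-(t+1) B) - mu(A) mu(B)| = mu(A) mu(B), and the
   visits have frequency mu(B) > 0, contradicting weak mixing. *)

Local Notation shift := Defs.shift.
(* Otherwise [indic] resolves to the real-valued indicator of MathComp-Analysis. *)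
Local Notation indic := Defs.indic.

Lemma iter_shiftE n (x : nat -> bool) m : iter n shift x m = x (m + n)%N.
Proof. by elim: n m => [|n IH] m /=; rewrite ?addn0 // /Defs.shift IH addSnnS. Qed.

Definition cylinder (L : seq nat) : set cantor_space :=
  [set x : nat -> bool | all x L].

Lemma cylinder_clopen L : clopen (cylinder L).
Proof.
elim: L => [|m L IH].
  by rewrite (_ : cylinder [::] = setT); [exact: clopenT | apply/seteqP].
have -> : cylinder (m :: L) = proj m @^-1` [set true] `&` cylinder L.
  by apply/seteqP; split => x /=; rewrite /cylinder /proj /= => /andP.
apply: clopenI IH; apply: preimage_clopen; last exact: proj_continuous.
by split; [exact: discrete_open | exact: discrete_closed].
Qed.

Lemma cylinder_cons_shift t L :
  cylinder (0%N :: map (addn t) L) =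
  cylinder [:: 0%N] `&` iter t shift @^-1` cylinder L.
Proof.
have shiftL (x : nat -> bool) : all x (map (addn t) L) = all (iter t shift x) L.
  by rewrite all_map; apply: eq_all => m /=; rewrite iter_shiftE addnC.
apply/seteqP; split => x; rewrite /cylinder /= shiftL andbT.
  by move/andP.
by move=> [-> ->].
Qed.

Lemma measurable_Omega_open (B : set cantor_space) :
  open B -> measurable (B : set Omega).
Proof. exact: sub_sigma_algebra. Qed.

Lemma continuous_indic_clopen (R : realType) (B : set cantor_space) :
  clopen B -> continuous (\1_B : cantor_space -> R).
Proof.
move=> [oB cB] x; have [Bx|nBx] := pselect (B x).
  apply: (@near_cst_continuous _ _ (1 : R)).
  by apply: filterS (open_nbhs_nbhs (conj oB Bx)) => y By; rewrite indicE mem_set.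
apply: (@near_cst_continuous _ _ (0 : R)).
have oCB : open (~` B) by exact: closed_openC.
by apply: filterS (open_nbhs_nbhs (conj oCB nBx)) => y nBy; rewrite indicE memNset.
Qed.

Lemma generic_clopen_frequency (R : realType) (mu : probability Omega R) xi
    (B : set cantor_space) :
  generic mu xi -> clopen B ->
  (fun N => N.+1%:R^-1 * \sum_(n < N.+1) (\1_B (iter n shift xi) : R))
    @ \oo --> fine (mu B).
Proof.
move=> gen cB; have mB := measurable_Omega_open (proj1 cB).
have := gen _ (@continuous_indic_clopen R _ cB).
rewrite integral_indic // setIT => cvg_avg.
apply: (fine_cvg (f := fun N => _%:E)).
by rewrite fineK // fin_num_measure.
Qed.

Lemma generic_indic_density (R : realType) (mu : probability Omega R)
    (S : set nat) (d : R) :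
  generic mu (indic S) -> has_density S d -> fine (mu (cylinder [:: 0%N])) = d.
Proof.
move=> gen dens.
have cvg_freq := generic_clopen_frequency gen (cylinder_clopen [:: 0%N]).
apply: (cvg_unique _ cvg_freq); first exact: Rhausdorff.
rewrite /has_density -cvg_shiftS in dens; apply: cvg_trans dens.
apply: near_eq_cvg; near=> N => /=.
rewrite mulrC big_add1 big_mkord; congr (_ * _); apply: eq_bigr => n _.
by rewrite indicE /cylinder mem_setE unfold_in /= iter_shiftE andbT.
Unshelve. all: by end_near.
Qed.

Lemma wm_generic_return (R : realType) (mu : probability Omega R) xi
    (A B : set cantor_space) :
  generic mu xi -> weakly_mixing mu -> clopen A -> clopen B ->
  (0 < mu A)%E -> (0 < mu B)%E ->
  exists t, B (iter t shift xi) /\ (0 < mu (A `&` iter t.+1 shift @^-1` B))%E.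
Proof.
move=> gen wm cA cB muA_gt0 muB_gt0.
have mA := measurable_Omega_open (proj1 cA).
have mB := measurable_Omega_open (proj1 cB).
set a := fine (mu A); set b := fine (mu B).
have a_gt0 : 0 < a by apply: fine_gt0; rewrite muA_gt0 ltey_eq fin_num_measure.
have b_gt0 : 0 < b by apply: fine_gt0; rewrite muB_gt0 ltey_eq fin_num_measure.
apply: contrapT => no_return.
pose v n := `|fine (mu (A `&` iter n shift @^-1` B)) - a * b|.
have visit_defect t : \1_B (iter t shift xi) * (a * b) <= v t.+1.
  rewrite indicE; have [/set_mem Bt|_] := boolP (iter t shift xi \in B); last first.
    by rewrite mul0r normr_ge0.
  rewrite /v; set m := mu _.
  have -> : m = 0%E.
    apply/eqP; rewrite eq_le measure_ge0 andbT leNgt; apply/negP => pos.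
    by apply: no_return; exists t; split.
  by rewrite mul1r sub0r normrN ger0_norm // mulr_ge0 // ltW.
pose G N := N.+1%:R^-1 * \sum_(n < N.+1) (\1_B (iter n shift xi) : R).
pose W N := N.+1%:R^-1 * \sum_(n < N.+1) v n.
have G_le N : a * b * G N <= a * b * harmonic N + W N.
  have sum_le : \sum_(n < N.+1) \1_B (iter n shift xi) * (a * b) <=
                a * b + \sum_(n < N.+1) v n.
    rewrite big_ord_recr big_ord_recl /= addrC; apply: lerD.
      by rewrite indicE; case: (_ \in _); rewrite ?mul1r ?mul0r // mulr_ge0 // ltW.
    rewrite -[leLHS]add0r; apply: lerD; first exact: normr_ge0.
    by apply: ler_sum => i _; apply: visit_defect.
  rewrite /G /W /=.
  have -> : a * b * N.+1%:R^-1 + N.+1%:R^-1 * \sum_(n < N.+1) v n =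
            N.+1%:R^-1 * (a * b + \sum_(n < N.+1) v n) by ring.
  have -> : a * b * (N.+1%:R^-1 * \sum_(n < N.+1) \1_B (iter n shift xi)) =
            N.+1%:R^-1 * (\sum_(n < N.+1) \1_B (iter n shift xi) * (a * b)).
    by rewrite -mulr_suml; ring.
  by rewrite ler_wpM2l // invr_ge0.
have G_cvg : G @ \oo --> b := generic_clopen_frequency gen cB.
have W_cvg : W @ \oo --> 0 := wm _ _ mA mB.
have : a * b * b <= a * b * 0 + 0.
  apply: (ler_cvg_to (cvgM (cvg_cst (a * b)) G_cvg)
                     (cvgD (cvgM (cvg_cst (a * b)) cvg_harmonic) W_cvg)).
  exact: nearW.
by rewrite mulr0 addr0 leNgt !mulr_gt0.
Qed.

Definition difference_clique (S : set nat) (s : seq nat) : Prop :=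
  uniq s /\ {in s &, forall x y, (y < x)%N -> S (x - y)%N}.

Definition has_large_difference_cliques (S : set nat) : Prop :=
  forall k, exists s, size s = k /\ difference_clique S s.

Lemma difference_clique_cons S s x :
  difference_clique S s -> {in s, forall y, (y < x)%N /\ S (x - y)%N} ->
  difference_clique S (x :: s).
Proof.
move=> [uniq_s diff_s] below_x; split.
  by rewrite /= uniq_s andbT; apply/negP => /below_x []; rewrite ltnn.
move=> y z; rewrite !inE => /predU1P[-> | ys] /predU1P[-> | zs].
- by rewrite ltnn.
- by move=> _; have [] := below_x z zs.
- by move=> xy; have [yx _] := below_x y ys; exfalso; lia.
- exact: diff_s.
Qed.

Section WMCliques.
Variables (R : realType) (S : set nat) (mu : probability Omega R).
Hypotheses (gen : generic mu (indic S)) (wm : weakly_mixing mu).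
Hypothesis mu_cylinder0_gt0 : (0 < mu (cylinder [:: 0%N]))%E.

Lemma difference_clique_extend h s :
  difference_clique S s -> {in s, forall x, (x <= h)%N} ->
  (0 < mu (cylinder [seq h - x | x <- s]%N))%E ->
  exists t, difference_clique S (h + t.+1 :: s)%N /\
    (0 < mu (cylinder [seq h + t.+1 - x | x <- h + t.+1 :: s]%N))%E.
Proof.
move=> clique_s le_h pattern_gt0.
have [t [visit pos]] := wm_generic_return gen wm (cylinder_clopen [:: 0%N])
  (cylinder_clopen _) mu_cylinder0_gt0 pattern_gt0.
have shifted_pattern : [seq h + t.+1 - x | x <- h + t.+1 :: s]%N =
                       0%N :: map (addn t.+1) [seq h - x | x <- s]%N.
  rewrite /= subnn -map_comp; congr (_ :: _).
  by apply/eq_in_map => x /le_h /=; lia.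
exists t; rewrite shifted_pattern cylinder_cons_shift; split => //.
apply: difference_clique_cons => // y ys; split; first by have := le_h _ ys; lia.
have := allP visit (h - y)%N (map_f _ ys).
rewrite iter_shiftE /indic (_ : ((h - y + t).+1 = h + t.+1 - y)%N); last first.
  by have := le_h _ ys; lia.
exact: set_mem.
Qed.

Lemma wm_large_difference_cliques : has_large_difference_cliques S.
Proof.
suff grow k : exists h s, [/\ size s = k.+1, difference_clique S s,
    {in s, forall x, (x <= h)%N} & (0 < mu (cylinder [seq h - x | x <- s]%N))%E].
  case=> [|k]; first by exists [::].
  by have [h [s [size_s clique_s _ _]]] := grow k; exists s.
elim: k => [|k [h [s [size_s clique_s le_h pattern_gt0]]]].
  exists 0%N, [:: 0%N]; split => //; last by move=> x; rewrite inE => /eqP ->.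
  by split => // x y; rewrite !inE => /eqP -> /eqP ->.
have [t [clique' pattern_gt0']] := difference_clique_extend clique_s le_h pattern_gt0.
exists (h + t.+1)%N, (h + t.+1 :: s)%N; split => //=; first by rewrite size_s.
by move=> x; rewrite inE => /predU1P[-> // | /le_h]; lia.
Qed.

End WMCliques.

Section PairwiseNullUnion.
Variables (d : measure_display) (T : measurableType d) (R : realType).

Lemma measure_bigsetU_null (mu : {measure set T -> \bar R}) (I : eqType)
    (s : seq I) (F : I -> set T) :
  (forall i, measurable (F i)) -> {in s, forall i, mu (F i) = 0%E} ->
  mu (\big[setU/set0]_(i <- s) F i) = 0%E.
Proof.
move=> mF; elim: s => [|i s IH] null; first by rewrite big_nil measure0.
rewrite big_cons measureU0 ?null ?mem_head //; first exact: bigsetU_measurable.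
by apply: IH => j js; apply: null; rewrite inE js orbT.
Qed.

Lemma measure_bigsetU_pairwise_null (mu : {measure set T -> \bar R})
    (I : eqType) (s : seq I) (F : I -> set T) :
  uniq s -> (forall i, measurable (F i)) -> {in s, forall i, (mu (F i) < +oo)%E} ->
  {in s &, forall i j, i != j -> mu (F i `&` F j) = 0%E} ->
  mu (\big[setU/set0]_(i <- s) F i) = \sum_(i <- s) mu (F i).
Proof.
move=> + mF; elim: s => [|i s IH] /=; first by rewrite !big_nil measure0.
move=> /andP[i_notin_s uniq_s] fin null.
have mU : measurable (\big[setU/set0]_(j <- s) F j) by exact: bigsetU_measurable.
rewrite !big_cons measureUfinl ?fin ?mem_head //.
rewrite [X in (_ - X)%E](_ : _ = 0%E) ?sube0; last first.
  rewrite (big_morph (setI (F i)) (id1 := set0) (op1 := setU) (@setIUr _ _)) ?setI0 //.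
  apply: measure_bigsetU_null => [j | j js]; first exact: measurableI.
  apply: null; rewrite ?inE ?eqxx ?js ?orbT //.
  by apply: contraNneq i_notin_s => ->.
rewrite IH // => [j js | j k js ks]; first by apply: fin; rewrite inE js orbT.
by apply: null; rewrite inE ?js ?ks orbT.
Qed.

End PairwiseNullUnion.

Section Poincare.
Variables (R : realType) (d : measure_display) (X : measurableType d).
Variables (mu : probability X R) (T : X -> X).
Hypothesis mT : measurable_fun setT T.
Hypothesis mu_T : forall A : set X, measurable A -> mu (T @^-1` A) = mu A.

Lemma measurable_iter_preimage n A :
  measurable A -> measurable (iter n T @^-1` A).
Proof.
elim: n A => // n IH A mA; apply: (IH (T @^-1` A)).
by rewrite -[T @^-1` A]setTI; exact: mT.
Qed.

Lemma measure_iter_preimage n A :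
  measurable A -> mu (iter n T @^-1` A) = mu A.
Proof.
elim: n A => // n IH A mA.
have mTA : measurable (T @^-1` A) by exact: (measurable_iter_preimage 1).
by rewrite -(mu_T mA); exact: IH.
Qed.

Lemma large_cliques_poincare S : has_large_difference_cliques S ->
  forall A, measurable A -> (0 < mu A)%E ->
  exists s, S s /\ (0 < mu (A `&` iter s T @^-1` A))%E.
Proof.
move=> cliques A mA muA_gt0; apply: contrapT => no_return.
have null_pair x y : (y < x)%N -> S (x - y)%N ->
    mu (iter x T @^-1` A `&` iter y T @^-1` A) = 0%E.
  move=> yx Sxy.
  have -> : iter x T @^-1` A `&` iter y T @^-1` A =
            iter y T @^-1` (iter (x - y) T @^-1` A `&` A).
    by apply/seteqP; split => z /=; rewrite -iterD subnK // ltnW.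
  rewrite measure_iter_preimage; last first.
    by apply: measurableI => //; exact: measurable_iter_preimage.
  apply/eqP; rewrite -measure_le0 leNgt setIC; apply/negP => pos.
  by apply: no_return; exists (x - y)%N.
set a := fine (mu A).
have a_gt0 : 0 < a by apply: fine_gt0; rewrite muA_gt0 ltey_eq fin_num_measure.
have [s [size_s [uniq_s diff_s]]] := cliques (Num.bound a^-1).
have muA : mu A = a%:E by rewrite fineK // fin_num_measure.
have union_eq : mu (\big[setU/set0]_(x <- s) iter x T @^-1` A) = (a *+ size s)%:E.
  rewrite measure_bigsetU_pairwise_null //.
  - transitivity (\sum_(x <- s) mu A).
      by apply: eq_bigr => x _; exact: measure_iter_preimage.
    by rewrite big_const_seq count_predT iter_addr_0 muA EFin_natmul.
  - by move=> x; exact: measurable_iter_preimage.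
  - by move=> x _; rewrite ltey_eq fin_num_measure //; exact: measurable_iter_preimage.
  move=> x y xs ys; rewrite neq_ltn => /orP[xy | yx].
    by rewrite setIC; exact: null_pair (diff_s _ _ ys xs xy).
  exact: null_pair (diff_s _ _ xs ys yx).
have := probability_le1 mu (bigsetU_measurable s (P := xpredT)
  (fun x _ => measurable_iter_preimage x mA)).
rewrite union_eq lee_fin size_s -mulr_natr leNgt => /negP; apply.
have ainv_ge0 : 0 <= a^-1 by rewrite invr_ge0 ltW.
have := archi_boundP ainv_ge0; have := mulfV (lt0r_neq0 a_gt0).
nra.
Qed.

End Poincare.

Lemma limn_esup_gt_frequently (R : realType) (u : nat -> R) (r : R) :
  (r%:E < limn_esup (fun n => (u n)%:E))%E ->
  forall N, exists2 n, (N <= n)%N & r < u n.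
Proof.
move=> r_lt N.
have : (r%:E < ereal_sup [set (u n)%:E | n in [set n | (N <= n)%N]])%E.
  apply: (lt_le_trans r_lt); apply: ereal_inf_lbound.
  by exists [set n | (N <= n)%N] => //; exists N.
by move/ereal_sup_gt => [_ [n /= Nn <-]]; rewrite lte_fin; exists n.
Qed.

Lemma upper_banach_density_gt0_windows (R : realType) (E : set nat) :
  (0 < upper_banach_density R E)%E ->
  exists2 delta : R, 0 < delta &
    forall m, exists a b, (m <= b - a)%N /\ delta < interval_ratio R E a b.
Proof.
move=> /ereal_sup_gt[_ [a [b [_ [long ->]]]] esup_gt0].
have [delta delta_gt0 delta_lt] : exists2 delta : R, 0 < delta &
    (delta%:E < limn_esup (fun n => (interval_ratio R E (a n) (b n))%:E))%E.
  move: esup_gt0; case: limn_esup => [r | |] //= r_gt0.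
    by rewrite lte_fin in r_gt0; exists (r / 2); rewrite ?lte_fin; lra.
  by exists 1 => //; exact: ltry.
exists delta => // m; have [N _ longN] := long m.
have [n Nn ratio_gt] := limn_esup_gt_frequently delta_lt N.
by exists (a n), (b n); split => //; exact: longN.
Qed.

Lemma difference_clique_window_count (S E : set nat) (s : seq nat) (a b m : nat) :
  difference_clique S s -> {in s, forall x, (x <= m)%N} ->
  (forall x y, E x -> E (x + y)%N -> ~ S y) ->
  (size s * \sum_(a <= k < b.+1) (k \in E) <= b - a + 1 + m)%N.
Proof.
move=> [uniq_s diff_s] le_m no_diff.
set W := [seq k <- index_iota a b.+1 | k \in E].
have size_W : size W = (\sum_(a <= k < b.+1) (k \in E))%N.
  by rewrite size_filter -sum1_count big_mkcond; apply: eq_bigr => k _; case: ifP.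
have memW k : k \in W -> E k /\ (a <= k <= b)%N.
  by rewrite mem_filter mem_index_iota ltnS => /andP[/set_mem].
have -> : (b - a + 1 + m = size (index_iota a (a + (b - a + 1 + m))))%N.
  by rewrite size_iota addKn.
rewrite -size_W -(size_allpairs addn); apply: uniq_leq_size.
  apply: allpairs_uniq => //; first by rewrite filter_uniq ?iota_uniq.
  move=> _ _ /allpairsP[[x w] [/= xs /memW[Ew _] ->]]
             /allpairsP[[y w'] [/= ys /memW[Ew' _] ->]] /= sum_eq.
  case: (ltngtP x y) => [xy | yx | xy]; last by rewrite -xy in sum_eq *; rewrite (addnI sum_eq).
    have w_eq : w = (w' + (y - x))%N by lia.
    by case: (no_diff w' (y - x)%N Ew'); [rewrite -w_eq | exact: diff_s].
  have w'_eq : w' = (w + (x - y))%N by lia.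
  by case: (no_diff w (x - y)%N Ew); [rewrite -w'_eq | exact: diff_s].
move=> _ /allpairsP[[x w] [/= /le_m xm /memW[_ aw] ->]].
rewrite mem_index_iota; lia.
Qed.

Lemma large_cliques_recurrent (R : realType) (S : set nat) :
  has_large_difference_cliques S ->
  forall E : set nat, (0 < upper_banach_density R E)%E ->
  exists s, S s /\ exists x, E x /\ E (x + s)%N.
Proof.
move=> cliques E /upper_banach_density_gt0_windows[delta delta_gt0 windows].
apply: contrapT => no_return.
have no_diff x y : E x -> E (x + y)%N -> ~ S y.
  by move=> Ex Exy Sy; apply: no_return; exists y; split => //; exists x.
set K := Num.bound (2 / delta).
have [s [size_s clique_s]] := cliques K.
set m := (\max_(x <- s) x)%N.
have [a [b [m_le ratio_gt]]] := windows m.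
have := difference_clique_window_count a b clique_s
  (fun x xs => leq_bigmax_seq x xs isT) no_diff.
rewrite /interval_ratio -natr_sum in ratio_gt.
set c := (\sum_(a <= k < b.+1) (k \in E))%N in ratio_gt *.
set L := (b - a + 1)%N in ratio_gt *; rewrite size_s -/m => count_le.
have L_gt0 : 0 < L%:R :> R by rewrite ltr0n /L addn1.
have dense : delta * L%:R < c%:R by rewrite -ltr_pdivlMr.
have K_large : 2 < K%:R * delta.
  by rewrite -ltr_pdivrMr // archi_boundP // divr_ge0 // ltW.
have K_gt0 : 0 < K%:R :> R.
  by rewrite -(pmulr_lgt0 _ delta_gt0); apply: lt_trans K_large.
have packed : K%:R * c%:R <= L%:R + m%:R :> R by rewrite -natrM -natrD ler_nat.
have short : m%:R <= L%:R :> R by rewrite ler_nat /L; lia.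
have : K%:R * (delta * L%:R) < K%:R * c%:R by rewrite ltr_pM2l.
nra.
Qed.

Theorem mainTheorem6 (R : realType) (S : set nat) :
  WM_set R S ->
  (* S is 1-recurrent *)
  (forall E : set nat, E `<=` [set n | (0 < n)%N] ->
     (0 < upper_banach_density R E)%E ->
     exists s, S s /\ exists x, E x /\ E (x + s)%N) /\
  (* S is a Poincare set *)
  (forall (d : measure_display) (X : measurableType d)
          (mu : probability X R) (T : X -> X),
     measurable_fun setT T ->
     (forall A : set X, measurable A -> mu (T @^-1` A) = mu A) ->
     forall A : set X, measurable A -> (0 < mu A)%E ->
     exists s, S s /\ (0 < mu (A `&` (iter s T @^-1` A)))%E).
Proof.
move=> [_ [[mu [_ [_ [gen wm]]]] [dens [dens_gt0 has_dens]]]].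
have mu_cylinder0_gt0 : (0 < mu (cylinder [:: 0%N]))%E.
  have mC := measurable_Omega_open (proj1 (cylinder_clopen [:: 0%N])).
  by rewrite -(fineK (fin_num_measure _ _ mC)) lte_fin
             (generic_indic_density gen has_dens).
have cliques := wm_large_difference_cliques gen wm mu_cylinder0_gt0.
split => [E _ | d X nu T mT nu_T]; first exact: large_cliques_recurrent.
exact: large_cliques_poincare.
Qed.
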